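(* Let $G$ be a finite group and let $\operatorname P$ and $\operatorname R$ be projection operators on the group algebra $\mathbb C G$. If $\operatorname P$ commutes with the projection onto each group element (i.e. onto the span of each basis vector $g\in G$), and $\operatorname R$ commutes with left multiplication by every element of $G$, then $$\|\operatorname{PR}\|^2\le \frac{\operatorname{rank}\operatorname P\cdot\operatorname{rank}\operatorname R}{|G|}.$$
   Context: $\mathbb C G$ is identified with $L^2(G)$ (functions on $G$), with the group elements forming an orthonormal basis; ''projection operator'' means orthogonal projection (self-adjoint idempotent). Left multiplication by $x$ is $[\operatorname L_x f](y)=f(x^{-1}y)$. $\|\cdot\|$ denotes operator norm. *)

From HB Require Import structures.
From mathcomp Require Import all_boot all_order all_fingroup all_algebra.
From mathcomp Require Import classical_sets reals.
From mathcomp Require Import complex.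
Set Implicit Arguments. Unset Strict Implicit. Unset Printing Implicit Defensive.
Import Order.TTheory GRing.Theory Num.Theory.
Local Open Scope ring_scope.

(* C G = L^2(G) is modelled as column vectors 'cV[R[i]]_#|gT|, where the
   coordinate i corresponds to the group element enum_val i (the group
   elements form the orthonormal standard basis). *)

Section Defs.
Variable R : realType.
Local Notation C := R[i].

Definition adjmx {n} (A : 'M[C]_n) : 'M[C]_n := \matrix_(i, j) (A j i)^*%C.

Definition is_projection {n} (A : 'M[C]_n) : Prop :=
  A *m A = A /\ adjmx A = A.

Definition vnorm {n} (v : 'cV[C]_n) : R :=
  Num.sqrt (\sum_i Normc.normc (v i 0) ^+ 2).

Definition opnorm {n} (A : 'M[C]_n) : R :=
  sup [set vnorm (A *m v) | v in [set v : 'cV[C]_n | vnorm v <= 1]]%classic.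

Variable gT : finGroupType.

(* left multiplication: [L_x f](y) = f(x^-1 y), i.e. L_x e_g = e_{x g} *)
Definition leftmul (x : gT) : 'M[C]_#|gT| :=
  \matrix_(i, j) ((enum_val i == x * enum_val j)%g)%:R.

Definition elt_proj (g : gT) : 'M[C]_#|gT| :=
  delta_mx (enum_rank g) (enum_rank g).

End Defs.

From HB Require Import structures.
From mathcomp Require Import all_boot all_order all_fingroup all_algebra.
From mathcomp Require Import classical_sets reals.
From mathcomp Require Import complex.
From mathcomp Require Import ring.
Set Implicit Arguments. Unset Strict Implicit. Unset Printing Implicit Defensive.
Import Order.TTheory GRing.Theory Num.Theory.
Local Open Scope ring_scope.

(* Commuting with the coordinate projections makes P diagonal, so
   |PQv|^2 = sum_g |P_gg|^2 |(Qv)_g|^2 <= (sum_g |P_gg|^2) c |v|^2 by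
   Cauchy-Schwarz, where c bounds the squared norms of the rows of Q.  For an
   orthogonal projection A the squared norm of row g is A_gg, so
   sum_g |P_gg|^2 = tr P = rank P; and commuting with left translations makes
   the diagonal of Q constant, whence c = tr Q / |G| = rank Q / |G|. *)

Lemma sqr_sum_mul_le (R : realFieldType) n (x y : 'I_n -> R) :
  (\sum_i x i * y i) ^+ 2 <= (\sum_i x i ^+ 2) * (\sum_i y i ^+ 2).
Proof.
set A := \sum_i x i ^+ 2; set B := \sum_i y i ^+ 2; set T := \sum_i x i * y i.
have lagrange_id :
    \sum_i \sum_j (x i * y j - x j * y i) ^+ 2 = 2 * (A * B - T ^+ 2).
  transitivity (\sum_i (x i ^+ 2 * B + A * y i ^+ 2 - 2 * (x i * y i) * T)).
    apply: eq_bigr => i _.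
    rewrite /A /B /T mulr_sumr mulr_suml mulr_sumr -big_split -sumrB /=.
    by apply: eq_bigr => j _; ring.
  rewrite sumrB big_split /= -mulr_sumr -!mulr_suml -mulr_sumr -/A -/B -/T.
  by ring.
have : 0 <= 2 * (A * B - T ^+ 2).
  by rewrite -lagrange_id; do 2!apply: sumr_ge0 => ? _; apply: sqr_ge0.
by rewrite pmulr_rge0 // subr_ge0.
Qed.

Section TraceIdempotent.
Variables (F : fieldType) (n : nat).

Lemma mxtrace_pid r : (r <= n)%N -> \tr (pid_mx r : 'M[F]_n) = r%:R.
Proof.
move=> le_rn; rewrite /mxtrace.
under eq_bigr => i _ do rewrite mxE eqxx /=.
rewrite -[r in RHS]card_ord -sumr_const (big_ord_widen n (fun=> 1) le_rn).
by rewrite [RHS]big_mkcond; apply: eq_bigr => i _; case: ltnP.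
Qed.

Lemma mxtrace_idem (A : 'M[F]_n) : A *m A = A -> \tr A = (\rank A)%:R.
Proof.
move=> AA; have eA := mulmx_ebase A.
set L := col_ebase A in eA; set U := row_ebase A in eA.
set r := \rank A in eA *.
have le_rn : (r <= n)%N by apply: rank_leq_row.
have pid_UL_pid : pid_mx r *m (U *m L) *m pid_mx r = pid_mx r :> 'M_n.
  apply: (can_inj (mulmxK (row_ebase_unit A))).
  apply: (can_inj (mulKmx (col_ebase_unit A))).
  by rewrite !mulmxA eA -2!mulmxA [L *m _]mulmxA eA AA.
rewrite -eA mxtrace_mulC mulmxA mxtrace_mulC -{1}(pid_mx_id _ _ _ le_rn).
by rewrite -mulmxA mxtrace_mulC -mulmxA mulmxA pid_UL_pid mxtrace_pid.
Qed.

End TraceIdempotent.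

Section DeltaSums.
Variables (R : pzSemiRingType) (n : nat).

Lemma sum_mul_delta_r (F : 'I_n -> R) i : \sum_k F k * (k == i)%:R = F i.
Proof.
rewrite (bigD1 i) //= eqxx mulr1 big1 ?addr0 // => k /negbTE ->.
by rewrite mulr0.
Qed.

Lemma sum_delta_mul_l (F : 'I_n -> R) i : \sum_k (k == i)%:R * F k = F i.
Proof.
rewrite (bigD1 i) //= eqxx mul1r big1 ?addr0 // => k /negbTE ->.
by rewrite mul0r.
Qed.

Lemma commute_delta_mx_diag (A : 'M[R]_n) :
  (forall i, A *m delta_mx i i = delta_mx i i *m A) ->
  forall i j, i != j -> A i j = 0.
Proof.
move=> commA i j neq_ij; have := congr1 (fun M : 'M_n => M i j) (commA j).
rewrite /= !mxE; under eq_bigr => k _ do rewrite mxE eqxx andbT.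
under [in RHS]eq_bigr => k _ do rewrite mxE (negbTE neq_ij) mul0r.
by rewrite sum_mul_delta_r big1.
Qed.

End DeltaSums.

Section ComplexMatrices.
Variable R : realType.
Local Notation C := R[i].
Local Notation nc := (@Normc.normc R).

Lemma normc_ge0 (z : C) : 0 <= nc z.
Proof. by case: z => a b; apply: sqrtr_ge0. Qed.

Lemma normcE_real (z : C) : (nc z)%:C%C = `|z|.
Proof. by case: z => a b; rewrite normc_def. Qed.

Lemma sqr_normcE_real (z : C) : (nc z ^+ 2)%:C%C = z * z^*%C.
Proof. by rewrite rmorphXn /= normcE_real sqr_normc. Qed.

Lemma normc_sum (I : Type) (r : seq I) (F : I -> C) :
  nc (\sum_(i <- r) F i) <= \sum_(i <- r) nc (F i).
Proof.
apply: (big_ind2 (fun z b => nc z <= b)) => // [|z1 b1 z2 b2 le1 le2].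
  by rewrite Normc.normc0.
by apply: le_trans (le_normcD _ _) _; apply: lerD.
Qed.

Lemma vnorm_sqr n (v : 'cV[C]_n) : vnorm v ^+ 2 = \sum_i nc (v i 0) ^+ 2.
Proof. by rewrite sqr_sqrtr // sumr_ge0 // => i _; apply: sqr_ge0. Qed.

Lemma sqr_normc_mulmx_le n (A : 'M[C]_n) (v : 'cV[C]_n) g :
  nc ((A *m v) g 0) ^+ 2 <= (\sum_h nc (A g h) ^+ 2) * vnorm v ^+ 2.
Proof.
rewrite vnorm_sqr.
apply: le_trans (sqr_sum_mul_le (fun h => nc (A g h)) (fun h => nc (v h 0))).
rewrite ler_sqr ?nnegrE ?normc_ge0 ?sumr_ge0 // => [|h _]; last first.
  by rewrite mulr_ge0 ?normc_ge0.
rewrite mxE; apply: le_trans (normc_sum _ _) _.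
by apply: ler_sum => h _; rewrite Normc.normcM.
Qed.

Lemma projection_row_sqr_normc n (A : 'M[C]_n) g : is_projection A ->
  (\sum_h nc (A g h) ^+ 2)%:C%C = A g g.
Proof.
case=> AA adjA; transitivity ((A *m adjmx A) g g); last by rewrite adjA AA.
rewrite rmorph_sum mxE; apply: eq_bigr => h _ /=.
by rewrite sqr_normcE_real mxE.
Qed.

Lemma projection_sqr_normc_sum n (A : 'M[C]_n) : is_projection A ->
  \sum_g \sum_h nc (A g h) ^+ 2 = (\rank A)%:R.
Proof.
move=> projA; apply: complexI; rewrite rmorph_sum rmorph_nat /=.
rewrite -mxtrace_idem; last by case: projA.
by apply: eq_bigr => g _; apply: projection_row_sqr_normc.
Qed.

Lemma diag_mulmx_vnorm_le n (D A : 'M[C]_n) (c : R) (v : 'cV[C]_n) :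
  (forall i j, i != j -> D i j = 0) ->
  (forall g, \sum_h nc (A g h) ^+ 2 <= c) ->
  vnorm (D *m A *m v) ^+ 2 <= (\sum_g nc (D g g) ^+ 2) * c * vnorm v ^+ 2.
Proof.
move=> diagD rowA; rewrite vnorm_sqr mulr_suml mulr_suml -mulmxA.
apply: ler_sum => g _; rewrite mxE (bigD1 g) //= big1 ?addr0; last first.
  by move=> h /negbTE neq_hg; rewrite diagD ?mul0r // eq_sym neq_hg.
rewrite Normc.normcM exprMn -mulrA ler_wpM2l ?exprn_ge0 ?normc_ge0 //.
apply: le_trans (sqr_normc_mulmx_le _ _ _) _.
by rewrite ler_wpM2r ?exprn_ge0 ?sqrtr_ge0.
Qed.

Lemma opnorm_sqr_le n (A : 'M[C]_n) (b : R) :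
  (forall v, vnorm v <= 1 -> vnorm (A *m v) ^+ 2 <= b) -> opnorm A ^+ 2 <= b.
Proof.
move=> bndA; rewrite /opnorm; set E := (X in sup X).
have vnorm0 : vnorm (0 : 'cV[C]_n) = 0.
  by rewrite /vnorm big1 ?sqrtr0 // => h _; rewrite mxE Normc.normc0 expr0n.
have E0 : E 0 by exists 0; rewrite /= ?mulmx0 vnorm0 ?ler01.
have b_ge0 : 0 <= b.
  by apply: le_trans (bndA 0 _); rewrite ?mulmx0 vnorm0 ?expr0n ?ler01.
have ubE : ubound E (Num.sqrt b).
  move=> _ [v /bndA le_b <-]; rewrite -ler_sqr ?nnegrE ?sqrtr_ge0 //.
  by rewrite (sqr_sqrtr b_ge0).
have sup_ge0 : 0 <= sup E by apply: ub_le_sup => //; exists (Num.sqrt b).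
rewrite -(sqr_sqrtr b_ge0) ler_sqr ?nnegrE ?sqrtr_ge0 //.
by apply: ge_sup => //; exists 0.
Qed.

End ComplexMatrices.

Section GroupAlgebra.
Variables (R : realType) (gT : finGroupType).
Local Notation C := R[i].
Local Notation n := #|gT|.

Lemma mulmx_leftmulE (M : 'M[C]_n) x i j :
  (M *m leftmul R x) i j = M i (enum_rank (x * enum_val j)%g).
Proof.
rewrite mxE -[RHS](sum_mul_delta_r (M i)); apply: eq_bigr => k _.
by rewrite mxE -(inj_eq enum_val_inj) enum_rankK.
Qed.

Lemma leftmul_mulmxE (M : 'M[C]_n) x i j :
  (leftmul R x *m M) i j = M (enum_rank (x^-1 * enum_val i)%g) j.
Proof.
rewrite mxE -[RHS](sum_delta_mul_l (M^~ j)); apply: eq_bigr => k _.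
rewrite mxE -(inj_eq enum_val_inj) enum_rankK.
by rewrite -[enum_val k == _](inj_eq (mulgI x)) mulKVg eq_sym.
Qed.

Lemma commute_elt_proj_diag (P : 'M[C]_n) :
  (forall g, P *m elt_proj R g = elt_proj R g *m P) ->
  forall i j, i != j -> P i j = 0.
Proof.
move=> commP; apply: commute_delta_mx_diag => i.
by rewrite -(enum_valK i); apply: commP.
Qed.

Lemma commute_leftmul_diag_const (Q : 'M[C]_n) :
  (forall x, Q *m leftmul R x = leftmul R x *m Q) ->
  forall i, Q i i = Q (enum_rank 1%g) (enum_rank 1%g).
Proof.
move=> commQ i.
have := congr1 (fun M : 'M_n => M i (enum_rank 1%g)) (commQ (enum_val i)).
by rewrite /= mulmx_leftmulE leftmul_mulmxE !enum_rankK mulg1 enum_valK mulVg.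
Qed.

End GroupAlgebra.

Theorem corollary1 (R : realType) (gT : finGroupType)
    (P Q : 'M[R[i]]_#|gT|) :
  is_projection P -> is_projection Q ->
  (forall g : gT, P *m elt_proj R g = elt_proj R g *m P) ->
  (forall x : gT, Q *m leftmul R x = leftmul R x *m Q) ->
  opnorm (P *m Q) ^+ 2 <= ((\rank P * \rank Q)%:R / #|gT|%:R).
Proof.
move=> projP projQ /commute_elt_proj_diag diagP.
move=> /commute_leftmul_diag_const constQ.
set i1 := enum_rank (1%g : gT); set c := \sum_h Normc.normc (Q i1 h) ^+ 2.
have rowQ g : \sum_h Normc.normc (Q g h) ^+ 2 = c.
  by apply: complexI; rewrite !projection_row_sqr_normc // constQ.
have rankQ : c *+ #|gT| = (\rank Q)%:R.
  rewrite -projection_sqr_normc_sum // (eq_bigr _ (fun g _ => rowQ g)).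
  by rewrite sumr_const card_ord.
have rankP : \sum_g Normc.normc (P g g) ^+ 2 = (\rank P)%:R.
  rewrite -projection_sqr_normc_sum //; apply: eq_bigr => g _.
  rewrite (bigD1 g) //= big1 ?addr0 // => h neq_hg.
  by rewrite diagP 1?eq_sym // Normc.normc0 expr0n.
have G_gt0 : (0 < #|gT|)%N by apply/card_gt0P; exists 1%g.
apply: opnorm_sqr_le => v le_v1.
have rowQ_le g : \sum_h Normc.normc (Q g h) ^+ 2 <= c by rewrite rowQ.
apply: le_trans (diag_mulmx_vnorm_le v diagP rowQ_le) _.
rewrite rankP natrM -rankQ -[c *+ _]mulr_natr [in X in _ <= X]mulrA.
rewrite mulfK ?pnatr_eq0 -?lt0n //.
have c_ge0 : 0 <= c by apply: sumr_ge0 => h _; apply: sqr_ge0.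
by rewrite ler_piMr ?mulr_ge0 ?ler0n // exprn_ile1 ?sqrtr_ge0.
Qed.
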